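(* Let $\Sigma$ be an alphabet with $|\Sigma|=3$. There exists an infinite word over $\Sigma$ that is pseudo-square-free with respect to the mirror image $\operatorname{Mir}$, and for every antimorphic involution $\theta\neq\operatorname{Mir}$ on $\Sigma^*$ there is no infinite word over $\Sigma$ that is pseudo-square-free with respect to $\theta$.
   Context: A function $\theta:\Sigma^*\to\Sigma^*$ is an antimorphic involution if $\theta(uv)=\theta(v)\theta(u)$ and $\theta(\theta(w))=w$ for all words $u,v,w$. The mirror image is $\operatorname{Mir}(b_1\cdots b_n)=b_n\cdots b_1$. A pseudo square with respect to $\theta$ is a nonempty word $u_1u_2$ with $u_1=u_2$ or $u_1=\theta(u_2)$. A word is pseudo-square-free with respect to $\theta$ if no factor (contiguous subword) of it is a pseudo square with respect to $\theta$. *)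

From mathcomp Require Import all_boot.
Set Implicit Arguments. Unset Strict Implicit. Unset Printing Implicit Defensive.

Definition antimorphic_involution (S : Type) (theta : seq S -> seq S) : Prop :=
  (forall u v, theta (u ++ v) = theta v ++ theta u) /\
  (forall w, theta (theta w) = w).

Definition Mir (S : Type) (w : seq S) : seq S := rev w.

Definition pseudo_square (S : Type) (theta : seq S -> seq S) (w : seq S) : Prop :=
  w <> [::] /\ exists u1 u2, w = u1 ++ u2 /\ (u1 = u2 \/ u1 = theta u2).

Definition factor (S : Type) (x : nat -> S) (i n : nat) : seq S :=
  mkseq (fun k => x (i + k)) n.

Definition pseudo_square_free_inf (S : Type) (theta : seq S -> seq S)
  (x : nat -> S) : Prop :=
  forall i n, ~ pseudo_square theta (factor x i n).

(* Every square is a pseudo square, and conversely a mirror pseudo square [u (rev u)] has two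
   equal letters in its middle; so the mirror-pseudo-square-free words are exactly the
   square-free ones. A ternary square-free word is the difference sequence
   [1 + t (n + 1) - t n] of the Thue-Morse word [t], because [t] is overlap-free.
   Any other antimorphic involution is [rev] composed with a letter involution [g] swapping
   two letters [a], [g a] and fixing the third one [c]. In a word avoiding its pseudo squares
   no two consecutive letters lie in [{a, g a}], nor are both [c], so [c] occurs at every
   other position; the remaining letters then alternate between [a] and [g a], producing the
   square [a c (g a) c a c (g a) c]. *)

From mathcomp Require Import all_boot zify.
From Corelib Require Import BinNums.
From Stdlib Require Import FunctionalExtensionality.
Set Implicit Arguments. Unset Strict Implicit. Unset Printing Implicit Defensive.

Definition square_at (T : Type) (x : nat -> T) (i p : nat) : Prop :=
  forall k, k < p -> x (i + k) = x (i + k + p).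

Definition overlap_at (T : Type) (x : nat -> T) (i p : nat) : Prop :=
  forall k, k <= p -> x (i + k) = x (i + k + p).

Definition square_free (T : Type) (x : nat -> T) : Prop :=
  forall i p, 0 < p -> ~ square_at x i p.

Lemma square_free_comp (T U : Type) (f : T -> U) (x : nat -> T) :
  (forall m n, f (x m) = f (x n) -> x m = x n) -> square_free x -> square_free (f \o x).
Proof. by move=> f_inj sqf i p p_gt0 sq; apply: (sqf i p p_gt0) => k /sq /f_inj. Qed.

Fixpoint pos_popcount_odd (p : positive) : bool :=
  match p with xH => true | xO q => pos_popcount_odd q | xI q => ~~ pos_popcount_odd q end.

Definition thue_morse (n : nat) : bool :=
  if bin_of_nat n is Npos p then pos_popcount_odd p else false.

Lemma thue_morse_bit (b : bool) n : thue_morse (b + n.*2) = b (+) thue_morse n.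
Proof.
rewrite -[n]bin_of_natK /thue_morse; case: (bin_of_nat n) => [|p]; first by case: b.
have -> : b + (nat_of_bin (Npos p)).*2 = Npos (if b then xI p else xO p).
  by case: b; rewrite /= natTrecE.
by rewrite !nat_of_binK; case: b.
Qed.

Lemma thue_morse_half n : thue_morse n = odd n (+) thue_morse n./2.
Proof. by rewrite -thue_morse_bit odd_double_half. Qed.

Lemma thue_morse_double n : thue_morse n.*2 = thue_morse n.
Proof. exact: (thue_morse_bit false). Qed.

Lemma thue_morse_succ_even n : ~~ odd n -> thue_morse n.+1 = ~~ thue_morse n.
Proof.
move=> n_even; rewrite thue_morse_half [in RHS]thue_morse_half /= uphalf_half.
by rewrite (negbTE n_even).
Qed.

Lemma thue_morse_no_triple n :
  thue_morse n = thue_morse n.+1 -> thue_morse n.+1 = thue_morse n.+2 -> False.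
Proof.
have even_step m : ~~ odd m -> thue_morse m = thue_morse m.+1 -> False.
  by move=> /thue_morse_succ_even ->; case: (thue_morse m).
move=> eq01 eq12; case n_odd: (odd n).
- by apply: (even_step n.+1); rewrite /= ?n_odd.
- by apply: (even_step n); rewrite ?n_odd.
Qed.

(* Five alternating steps contain an even position [2h] with
   [t (2h) = t (2h + 2) = t (2h + 4)], that is [t h = t (h + 1) = t (h + 2)]. *)
Lemma thue_morse_not_alternating i :
  ~ (forall k, k < 5 -> thue_morse (i + k).+1 = ~~ thue_morse (i + k)).
Proof.
move=> alt; pose h := (i + odd i)./2.
have h2 : h.*2 = i + odd i.
  by rewrite /h -[in RHS](odd_double_half (i + odd i)) oddD oddb addbb.
have two_steps j : j <= 2 -> thue_morse (h.*2 + j).+2 = thue_morse (h.*2 + j).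
  move=> le_j2; rewrite h2 -addnA -addnS alt; last by case: (odd i); lia.
  by rewrite addnS alt ?negbK //; case: (odd i); lia.
apply: (@thue_morse_no_triple h).
- rewrite -thue_morse_double -[thue_morse h.+1]thue_morse_double doubleS.
  by rewrite -[h.*2]addn0 two_steps.
- rewrite -[thue_morse h.+1]thue_morse_double -[thue_morse h.+2]thue_morse_double !doubleS.
  by rewrite -addn2 two_steps.
Qed.

Lemma overlap_even_half i p :
  ~~ odd p -> overlap_at thue_morse i p -> overlap_at thue_morse i./2 p./2.
Proof.
move=> p_even ov k le_k.
have p2 : p./2.*2 = p by rewrite -[RHS]odd_double_half (negbTE p_even).
have := ov k.*2; rewrite -{1}p2 leq_double => /(_ le_k).
have -> : i + k.*2 = odd i + (i./2 + k).*2 by rewrite doubleD addnA odd_double_half.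
have -> : odd i + (i./2 + k).*2 + p = odd i + (i./2 + k + p./2).*2.
  by rewrite !doubleD p2 !addnA.
by rewrite !thue_morse_bit => /addbI.
Qed.

(* For odd [p] the overlap transports the forced alternation at even positions to odd ones. *)
Lemma overlap_odd_alternating i p : odd p -> overlap_at thue_morse i p ->
  forall k, k < p.*2 -> thue_morse (i + k).+1 = ~~ thue_morse (i + k).
Proof.
move=> p_odd ov.
have first_half k : k < p -> thue_morse (i + k).+1 = ~~ thue_morse (i + k).
  move=> lt_kp; case ik_odd: (odd (i + k)).
  - rewrite -addnS ov // addnS addSn thue_morse_succ_even; last by rewrite oddD ik_odd p_odd.
    by rewrite -ov // ltnW.
  - by apply: thue_morse_succ_even; rewrite ik_odd.
move=> k lt_k2p; case: (ltnP k p) => [|le_pk]; first exact: first_half.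
rewrite -addnn in lt_k2p.
have -> : i + k = i + (k - p) + p by lia.
rewrite -(ov (k - p)); last by lia.
rewrite -addSn -addnS -ov; last by lia.
by rewrite addnS first_half //; lia.
Qed.

Lemma thue_morse_overlap_free i p : 0 < p -> ~ overlap_at thue_morse i p.
Proof.
elim/ltn_ind: p i => p IH i p_gt0 ov.
have p2 := odd_double_half p; rewrite -addnn in p2.
case p_odd: (odd p) in p2 *.
- have alt := overlap_odd_alternating p_odd ov.
  case: (ltnP p 3) => [lt_p3|ge_p3].
  + have p1 : p = 1 by lia.
    have := alt 0; have := ov 0; rewrite p1 addn0 addn1 => /(_ isT) -> /(_ isT).
    by case: (thue_morse i.+1).
  + apply: (@thue_morse_not_alternating i) => k lt_k5; apply: alt.
    rewrite -addnn; lia.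
- by apply: (IH p./2 _ i./2 _ (overlap_even_half _ ov)); rewrite ?p_odd //; lia.
Qed.

Definition thue_morse_diff (n : nat) : nat := 1 + thue_morse n.+1 - thue_morse n.

Lemma thue_morse_diff_lt3 n : thue_morse_diff n < 3.
Proof. by rewrite /thue_morse_diff; case: (thue_morse n); case: (thue_morse n.+1). Qed.

Lemma diff_bool_eq (a b c d : bool) : 1 + b - a = 1 + d - c ->
  (a == c) = (b == d) /\ (a != c -> b = a).
Proof. by case: a; case: b; case: c; case: d. Qed.

(* A square of the difference sequence either lifts to an overlap of [thue_morse], or
   makes [thue_morse] constant on [j, j + p] although [thue_morse (j + p) != thue_morse j]. *)
Lemma thue_morse_diff_square_free : square_free thue_morse_diff.
Proof.
move=> j p p_gt0 sq.
have invariant k : k <= p ->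
    ((thue_morse (j + k) == thue_morse (j + k + p)) = (thue_morse j == thue_morse (j + p)))
    /\ (thue_morse j != thue_morse (j + p) -> thue_morse (j + k) = thue_morse j).
  elim: k => [|k IHk] le_kp; first by rewrite addn0.
  have [same const] := IHk (ltnW le_kp).
  have [same_step const_step] := diff_bool_eq (sq k le_kp).
  rewrite addnS addSn; split=> [|neq]; first by rewrite -same_step same.
  rewrite const_step; first exact: const.
  by rewrite -eqbF_neg same eqbF_neg.
have [_ const] := invariant p (leqnn p).
case: (thue_morse j =P thue_morse (j + p)) => [eq_jp|/eqP neq_jp]; last first.
  by move: (neq_jp); rewrite {1}const // eqxx.
apply: (@thue_morse_overlap_free j p p_gt0) => k le_kp.
by apply/eqP; rewrite (invariant k le_kp).1 eq_jp.
Qed.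

Section Factors.
Variables (T : Type) (x : nat -> T).

Lemma factor_cat i m n : factor x i (m + n) = factor x i m ++ factor x (i + m) n.
Proof.
rewrite /factor /mkseq iotaD map_cat add0n; congr (_ ++ _).
by rewrite -[m in iota m n]addn0 iotaDl -map_comp; apply: eq_map => k /=; rewrite addnA.
Qed.

Lemma nth_factor y i n k : k < n -> nth y (factor x i n) k = x (i + k).
Proof. exact: nth_mkseq. Qed.

Lemma square_pseudo_square (theta : seq T -> seq T) i p :
  0 < p -> square_at x i p -> pseudo_square theta (factor x i (p + p)).
Proof.
move=> p_gt0 sq; split; first by move/(congr1 size); rewrite size_mkseq /=; lia.
exists (factor x i p), (factor x (i + p) p); split; first exact: factor_cat.
left; apply: (@eq_from_nth _ (x i)); rewrite ?size_mkseq // => k lt_kp.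
by rewrite !nth_factor // sq // addnAC.
Qed.

Lemma pseudo_square_free_square_free (theta : seq T -> seq T) :
  pseudo_square_free_inf theta x -> square_free x.
Proof. by move=> psf i p p_gt0 /(square_pseudo_square theta p_gt0); apply: psf. Qed.

(* [u1 = rev u2] forces the two letters in the middle of [u1 ++ u2] to coincide. *)
Lemma mir_pseudo_square_square i n :
  pseudo_square (@Mir T) (factor x i n) -> exists j p, 0 < p /\ square_at x j p.
Proof.
case=> ne [u1 [u2 [w_eq u_eq]]].
have size_u : size u1 = size u2 by case: u_eq => ->; rewrite ?size_rev.
set m := size u2 in size_u.
have n_eq : n = m + m.
  by rewrite -(size_mkseq (fun k => x (i + k)) n) -/(factor x i n) w_eq size_cat size_u.
have m_gt0 : 0 < m by move: ne; rewrite n_eq; case: (m).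
have [u1_eq u2_eq] : u1 = factor x i m /\ u2 = factor x (i + m) m.
  rewrite n_eq factor_cat in w_eq; have size_f : size (factor x i m) = m by rewrite size_mkseq.
  split; first by rewrite -(take_size_cat u2 size_u) -w_eq take_size_cat.
  by rewrite -(drop_size_cat u2 size_u) -w_eq drop_size_cat.
case: u_eq => [u_eq|u_rev].
- exists i, m; split=> // k lt_km.
  have := congr1 (nth (x i) ^~ k) u_eq.
  by rewrite u1_eq u2_eq !nth_factor // addnAC.
- have lt_m : m.-1 < m by rewrite prednK.
  exists (i + m.-1), 1; split=> // k; rewrite ltnS leqn0 => /eqP ->.
  have := congr1 (nth (x i) ^~ m.-1) u_rev.
  rewrite /Mir nth_rev // u1_eq u2_eq size_mkseq prednK // subnn !nth_factor //.
  by rewrite !addn0 addn1 -addnS prednK.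
Qed.

Lemma square_free_mir : square_free x -> pseudo_square_free_inf (@Mir T) x.
Proof.
by move=> sqf i n /mir_pseudo_square_square [j [p [p_gt0 /(sqf j p p_gt0)]]].
Qed.

End Factors.

Section AntimorphicInvolution.
Variables (T : Type) (theta : seq T -> seq T).
Hypothesis theta_anti : antimorphic_involution theta.

Lemma antimorphic_nil : theta [::] = [::].
Proof.
have := congr1 size (theta_anti.1 [::] [::]); rewrite cat0s size_cat.
by move=> size_eq; apply/size0nil; lia.
Qed.

Lemma antimorphic_cons s w : theta (s :: w) = theta w ++ theta [:: s].
Proof. by rewrite -cat1s theta_anti.1. Qed.

Lemma size_antimorphic_ge w : size w <= size (theta w).
Proof.
elim: w => [|s w IHw] //=; rewrite antimorphic_cons size_cat.
have : 0 < size (theta [:: s]).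
  by case s_img: (theta [:: s]) (theta_anti.2 [:: s]) => //; rewrite antimorphic_nil.
lia.
Qed.

Lemma size_antimorphic w : size (theta w) = size w.
Proof.
apply/eqP; rewrite eqn_leq size_antimorphic_ge andbT.
by rewrite -{2}(theta_anti.2 w) size_antimorphic_ge.
Qed.

Definition letter_image (s : T) : T := head s (theta [:: s]).

Lemma antimorphic_letter s : theta [:: s] = [:: letter_image s].
Proof.
by rewrite /letter_image; case: (theta [:: s]) (size_antimorphic [:: s]) => [|y []].
Qed.

Lemma antimorphicE w : theta w = rev (map letter_image w).
Proof.
elim: w => [|s w IHw]; first exact: antimorphic_nil.
by rewrite antimorphic_cons IHw antimorphic_letter /= rev_cons cats1.
Qed.

Lemma letter_imageK : involutive letter_image.
Proof. by move=> s; have := theta_anti.2 [:: s]; rewrite !antimorphic_letter => -[]. Qed.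

End AntimorphicInvolution.

Section ThreeLetters.
Variables (S : finType) (g : S -> S) (a c : S).
Hypotheses (S3 : #|S| = 3) (gK : involutive g).
Hypotheses (ga_neq : g a != a) (c_new : c \notin [set a; g a]).

Lemma three_letters y : [|| y == a, y == g a | y == c].
Proof.
have full : [set a; g a; c] = [set: S].
  apply/eqP; rewrite eqEcard subsetT cardsT S3 setUC cardsU1 c_new cards2.
  by rewrite (eq_sym a) ga_neq.
by move: (in_setT y); rewrite -full !inE -orbA.
Qed.

Lemma moved_letters u v : u != c -> v != c -> u = v \/ u = g v.
Proof.
move=> u_c v_c.
case/or3P: (three_letters u) => /eqP u_eq; last by rewrite u_eq eqxx in u_c.
all: case/or3P: (three_letters v) => /eqP v_eq; last by rewrite v_eq eqxx in v_c.
all: rewrite u_eq v_eq ?gK; by [left | right].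
Qed.

(* [x] alternates between [c] and the moved letters, which in turn alternate between [a]
   and [g a], so [x] has period 4. *)
Lemma adjacent_moved_square x : (forall n, x n != g (x n.+1)) -> ~ square_free x.
Proof.
move=> no_adj sqf.
have no_repeat n : x n != x n.+1.
  apply/eqP => eq_n; apply: (sqf n 1) => // k; rewrite ltnS leqn0 => /eqP ->.
  by rewrite addn0 addn1.
have c_step n : (x n.+1 == c) = (x n != c).
  case: (x n =P c) => [<-|/eqP xn_c] /=; first by rewrite eq_sym (negbTE (no_repeat n)).
  apply/negPn/negP => xn1_c.
  case: (moved_letters xn_c xn1_c) => /eqP.
  - exact/negP/no_repeat.
  - exact/negP/no_adj.
have parity n k : x n != c -> (x (n + k) == c) = odd k.
  by move=> xn_c; elim: k => [|k IHk]; rewrite ?addn0 ?(negbTE xn_c) // addnS c_step IHk.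
have at_c n k : x n != c -> odd k -> x (n + k) = c by move=> ? ?; apply/eqP; rewrite parity.
have skip n : x n != c -> x n != x (n + 2).
  move=> xn_c; apply/eqP => eq_n; apply: (sqf n 2) => // -[|[|//]] _; rewrite ?addn0 //.
  by rewrite -addnA !at_c.
have period4 m : x m != c -> x m = x (m + 4).
  move=> xm_c; have xm2_c : x (m + 2) != c by rewrite parity.
  have xm4_c : x (m + 4) != c by rewrite parity.
  case: (moved_letters xm_c xm2_c) => [/eqP|->]; first by rewrite (negbTE (skip m xm_c)).
  case: (moved_letters xm2_c xm4_c) => [/eqP|->]; last by rewrite gK.
  by move: (skip _ xm2_c); rewrite -addnA => /negbTE ->.
have [n xn_c] : exists n, x n != c.
  by case: (boolP (x 0 == c)) => [x0_c|]; [exists 1; rewrite c_step x0_c | exists 0].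
apply: (sqf n 4) => // -[|[|[|[|//]]]] _.
- by rewrite addn0; apply: period4.
- by rewrite -addnA !at_c.
- by apply: period4; rewrite parity.
- by rewrite -addnA !at_c.
Qed.

End ThreeLetters.

Lemma mir_pseudo_square_free_word (S : finType) :
  2 < #|S| -> exists x : nat -> S, pseudo_square_free_inf (@Mir S) x.
Proof.
move=> S_gt2; have /card_gt0P [x0 _] : 0 < #|S| by lia.
exists (nth x0 (enum S) \o thue_morse_diff).
apply/square_free_mir/(square_free_comp _ thue_morse_diff_square_free) => m n /eqP.
have lt_diff k : thue_morse_diff k < size (enum S).
  by rewrite -cardE (leq_trans (thue_morse_diff_lt3 k) S_gt2).
by rewrite nth_uniq ?enum_uniq // => /eqP.
Qed.

Lemma no_pseudo_square_free_word (S : finType) (theta : seq S -> seq S) :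
  #|S| = 3 -> antimorphic_involution theta -> theta <> @Mir S ->
  ~ exists x : nat -> S, pseudo_square_free_inf theta x.
Proof.
move=> S3 theta_anti theta_neq [x psf].
pose g := letter_image theta.
have gK : involutive g := letter_imageK theta_anti.
have thetaE : forall w, theta w = rev (map g w) := antimorphicE theta_anti.
case: (boolP [exists a, g a != a]) => [/existsP [a ga_neq] | /existsPn g_id]; last first.
  apply: theta_neq; apply: functional_extensionality => w.
  by rewrite thetaE /Mir map_id_in // => s _; apply/eqP/negPn/g_id.
have /subsetPn [c _ c_new] : ~~ ([set: S] \subset [set a; g a]).
  by apply/negP => /subset_leq_card; rewrite cardsT S3 cards2; case: (a != g a).
apply: (adjacent_moved_square S3 gK ga_neq c_new _ (pseudo_square_free_square_free psf)).
move=> n; apply/eqP => adj; apply: (psf n 2); split=> //.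
exists [:: x n], [:: x n.+1]; split; first by rewrite /factor /mkseq /= addn0 addn1.
by right; rewrite thetaE adj.
Qed.

Theorem mainTheorem9 (S : finType) (hS : #|S| = 3) :
  (exists x : nat -> S, pseudo_square_free_inf (@Mir S) x) /\
  (forall theta : seq S -> seq S,
     antimorphic_involution theta -> theta <> @Mir S ->
     ~ exists x : nat -> S, pseudo_square_free_inf theta x).
Proof.
split; first by apply: mir_pseudo_square_free_word; rewrite hS.
by move=> theta; apply: no_pseudo_square_free_word.
Qed.
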